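(* Let $X$ be a locally finite poset with a unique minimal element $0$ and let $g:X\to L^+$ be isotone. Then the set of functions $f:X\to L^+$ satisfying $g(x)=\bigvee_{y\le x}f(y)$ for all $x\in X$ is exactly the interval $[m_*,m^*]=\{f: m_*(x)\le f(x)\le m^*(x)\ \forall x\in X\}$, where $m^*(x)=g(x)$ for all $x$, and $m_*(x)=g(x)$ if $g(x)>g(y)$ for all $y\prec x$, $m_*(x)=\mathbb{O}$ otherwise.
   Context: $(L^+,\le)$ is a totally ordered set with bottom $\mathbb{O}$ and top $\mathbb{1}$. $X$ locally finite means every interval $[u,v]=\{x:u\le x\le v\}$ is finite. $y\prec x$ means $x$ covers $y$ ($y<x$ and no element strictly between). Isotone means order preserving. *)

From HB Require Import structures.
From mathcomp Require Import all_boot all_order.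
From Stdlib Require Import ClassicalDescription.
Set Implicit Arguments. Unset Strict Implicit. Unset Printing Implicit Defensive.
Import Order.TTheory.
Local Open Scope order_scope.

Definition locally_finite (d : Order.disp_t) (X : porderType d) : Prop :=
  forall u v : X, exists s : seq X, forall x : X, u <= x <= v -> x \in s.

Definition covers (d : Order.disp_t) (X : porderType d) (y x : X) : Prop :=
  y < x /\ ~ (exists z : X, y < z /\ z < x).

Definition isotone (d : Order.disp_t) (X : porderType d)
  (d' : Order.disp_t) (L : porderType d') (g : X -> L) : Prop :=
  forall x y : X, x <= y -> g x <= g y.

(* g(x) = \bigvee_{y <= x} f(y): the finite join over the down-set of x,
   computed along any list s enumerating (a superset of) the down-set. *)
Definition join_below (d : Order.disp_t) (X : porderType d)
  (d' : Order.disp_t) (L : tbOrderType d') (f : X -> L) (x : X) (v : L) : Prop :=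
  forall s : seq X, (forall y : X, y <= x -> y \in s) ->
    v = \join_(y <- s | y <= x) f y.

Definition m_upper (d : Order.disp_t) (X : porderType d)
  (d' : Order.disp_t) (L : tbOrderType d') (g : X -> L) : X -> L := g.

Definition m_lower (d : Order.disp_t) (X : porderType d)
  (d' : Order.disp_t) (L : tbOrderType d') (g : X -> L) (x : X) : L :=
  if excluded_middle_informative (forall y : X, covers y x -> g y < g x)
  then g x else \bot.

(* The upper bound is forced because f y <= g y for every y. For the lower
   bound: if g jumps strictly across all covers of x, every f y with y < x lies
   below g of some cover of x, hence strictly below g x, so the join can only
   reach g x through f x itself. Conversely, for f between the bounds, the
   inequality g x <= join holds by induction on the (finite) down-set: either
   f x >= g x already, or some cover c of x has g x <= g c, which is handled by
   the induction hypothesis at c. *)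
From HB Require Import structures.
From mathcomp Require Import all_boot all_order.
From Stdlib Require Import Classical ClassicalDescription Wf_nat.
Set Implicit Arguments. Unset Strict Implicit. Unset Printing Implicit Defensive.
Import Order.TTheory.
Local Open Scope order_scope.

Lemma sub_count_lt (T : eqType) (p q : pred T) (s : seq T) (a : T) :
  subpred p q -> a \in s -> q a -> ~~ p a -> (count p s < count q s)%N.
Proof.
move=> pq; elim: s => [//|b s IH]; rewrite inE => /orP [/eqP <-|ains] qa npa /=.
  by rewrite qa (negbTE npa) add0n add1n ltnS; apply: sub_count.
have := IH ains qa npa.
case: (boolP (p b)) => pb; first by rewrite (pq _ pb) /= !add1n ltnS.
by rewrite add0n => h; apply: (leq_trans h); apply: leq_addl.
Qed.

Section FiniteDownsets.

Variables (d : Order.disp_t) (X : porderType d).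

Definition finite_downsets : Prop :=
  forall x : X, exists s : seq X, forall z, z <= x -> z \in s.

Lemma locally_finite_finite_downsets (zero : X) :
  (forall x : X, zero <= x) -> locally_finite X -> finite_downsets.
Proof.
move=> hzero hlf x; have [s hs] := hlf zero x.
by exists s => z zx; apply: hs; rewrite hzero zx.
Qed.

Lemma count_ge_lt (s : seq X) (y z : X) :
  y < z -> y \in s -> (count (>= z) s < count (>= y) s)%N.
Proof.
move=> yz ys; apply: (@sub_count_lt _ (>= z) (>= y) _ _ _ ys (lexx y)).
  by move=> w /= zw; apply: le_trans zw; apply: ltW.
by rewrite /= lt_geF.
Qed.

Lemma count_le_lt (s : seq X) (y z : X) :
  y < z -> z \in s -> (count (<= y) s < count (<= z) s)%N.
Proof.
move=> yz zs; apply: (@sub_count_lt _ (<= y) (<= z) _ _ _ zs (lexx z)).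
  by move=> w /= wy; apply: le_trans wy (ltW yz).
by rewrite /= lt_geF.
Qed.

Lemma exists_cover_above (x y : X) :
  finite_downsets -> y < x -> exists2 c, y <= c & covers c x.
Proof.
move=> hfin; have [s hs] := hfin x; move: y.
elim/(induction_ltof1 _ (fun y => count (>= y) s)) => y IH yx.
case: (classic (exists z, y < z /\ z < x)) => [[z [yz zx]]|noz]; last first.
  by exists y.
have [|c zc cx] := IH z _ zx.
  by rewrite /ltof; apply/ssrnat.ltP; apply: count_ge_lt yz _; apply/hs/ltW.
by exists c => //; apply: le_trans zc; apply: ltW.
Qed.

End FiniteDownsets.

Section JoinBelow.

Variables (d : Order.disp_t) (X : porderType d).
Variables (d' : Order.disp_t) (L : tbOrderType d').
Variables (g f : X -> L).

Lemma m_lowerP (x : X) :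
  m_lower g x = g x \/ exists2 c, covers c x & g x <= g c.
Proof.
rewrite /m_lower.
destruct (excluded_middle_informative _) as [hcov|ncov]; [by left | right].
have [c ncx] := not_all_ex_not _ _ ncov.
have [cx gc] := imply_to_and _ _ ncx.
by exists c => //; rewrite leNgt; apply/negP.
Qed.

Lemma joins_lt (I : Type) (s : seq I) (P : pred I) (F : I -> L) (a : L) :
  \bot < a -> (forall i, P i -> F i < a) -> \join_(i <- s | P i) F i < a.
Proof.
move=> a_gt0 hF; apply: (big_ind (fun v => v < a)) => //.
by move=> u v ua va; rewrite ltUx ua va.
Qed.

Lemma join_below_le_upper (x : X) (s : seq X) :
  isotone g -> (forall y, f y <= g y) -> \join_(y <- s | y <= x) f y <= g x.
Proof.
by move=> hg fg; apply: joins_le => y yx; apply: le_trans (fg y) (hg _ _ yx).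
Qed.

Lemma lower_le_join_below (x : X) (s : seq X) :
  (forall y, m_lower g y <= f y) -> (forall z, z <= x -> z \in s) ->
  g x <= \join_(y <- s | y <= x) f y.
Proof.
move=> lf hs; suff: forall y, y <= x -> g y <= \join_(z <- s | z <= y) f z.
  by apply.
elim/(induction_ltof1 _ (fun y => count (<= y) s)) => y IH yx.
have [gy | [c [cy _] gyc]] := m_lowerP y.
  rewrite -gy; apply: le_trans (lf y) _.
  by apply: joins_sup_seq; [apply: hs yx | apply: lexx].
have cx := le_trans (ltW cy) yx.
apply: le_trans gyc (le_trans (IH c _ cx) _).
  by rewrite /ltof; apply/ssrnat.ltP; apply: count_le_lt cy (hs _ yx).
apply/joinsP_seq => z zs zc; apply: joins_sup_seq => //.
exact: le_trans zc (ltW cy).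
Qed.

Lemma join_below_upper (x : X) :
  finite_downsets X -> join_below f x (g x) -> f x <= g x.
Proof.
move=> hfin gx; have [s hs] := hfin x; rewrite (gx s hs).
by apply: joins_sup_seq; [apply: hs | apply: lexx].
Qed.

Lemma join_below_lower (x : X) :
  finite_downsets X -> isotone g -> (forall y, join_below f y (g y)) ->
  m_lower g x <= f x.
Proof.
move=> hfin hg hf; rewrite /m_lower.
destruct (excluded_middle_informative _) as [hcov|ncov]; last exact: le0x.
case: (leP (g x) (f x)) => // fx_lt.
have [s hs] := hfin x.
suff: \join_(y <- s | y <= x) f y < g x by rewrite -(hf x s hs) ltxx.
apply: joins_lt => [|y yx]; first exact: le_lt_trans (le0x _) fx_lt.
have [->|yx'] := eqVneq y x; first by [].
have yx_lt : y < x by rewrite lt_neqAle yx' yx.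
have [c yc cx] := exists_cover_above hfin yx_lt.
apply: le_lt_trans (join_below_upper hfin (hf y)) _.
exact: le_lt_trans (hg _ _ yc) (hcov _ cx).
Qed.

End JoinBelow.

Theorem theorem2 (d : Order.disp_t) (X : porderType d)
  (d' : Order.disp_t) (L : tbOrderType d')
  (zero : X) (hzero : forall x : X, zero <= x)
  (hlf : locally_finite X)
  (g : X -> L) (hg : isotone g) :
  forall f : X -> L,
    (forall x : X, join_below f x (g x)) <->
    (forall x : X, m_lower g x <= f x /\ f x <= m_upper g x).
Proof.
have hfin := locally_finite_finite_downsets hzero hlf.
move=> f; split=> [hf x | hm x s hs].
  by split; [apply: join_below_lower | apply: join_below_upper].
have fg y : f y <= g y by have [_] := hm y.
apply/eqP; rewrite eq_le join_below_le_upper // andbT.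
by apply: lower_le_join_below => // y; have [] := hm y.
Qed.
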